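(* Let $(\Gamma,\psi)$ be an $H$-asymptotic couple with asymptotic integration, and let $\Psi=\psi(\Gamma\setminus\{0\})$. Then the sets $\Psi$ and $\Psi^{\downarrow}$ are jammed.
   Context: An asymptotic couple is a pair $(\Gamma,\psi)$ with $\Gamma$ an ordered abelian group and $\psi:\Gamma\setminus\{0\}\to\Gamma$ such that for all nonzero $\alpha,\beta$: $\alpha+\beta\ne0\Rightarrow\psi(\alpha+\beta)\ge\min(\psi(\alpha),\psi(\beta))$; $\psi(k\alpha)=\psi(\alpha)$ for $k\in\mathbb{Z}\setminus\{0\}$; $\alpha>0\Rightarrow\alpha+\psi(\alpha)>\psi(\beta)$. $H$-asymptotic: $0<\alpha\le\beta\Rightarrow\psi(\alpha)\ge\psi(\beta)$. Asymptotic integration: every $\alpha\in\Gamma$ equals $\gamma+\psi(\gamma)$ for some $\gamma\ne0$. $\Psi^{\downarrow}=\{\delta\in\Gamma:\delta\le\sigma\text{ for some }\sigma\in\Psi\}$. A set $S\subseteq\Gamma$ is jammed if $S\ne\emptyset$, $S$ has no greatest element, and for every convex subgroup $\Delta\ne\{0\}$ of $\Gamma$ there is $\gamma_0\in S$ such that $\gamma_1-\gamma_0\in\Delta$ for every $\gamma_1\in S$ with $\gamma_1>\gamma_0$. *)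

From mathcomp Require Import all_boot all_algebra.
Set Implicit Arguments. Unset Strict Implicit. Unset Printing Implicit Defensive.
Import GRing.Theory.
Local Open Scope ring_scope.

Definition ordered_abelian_group (G : zmodType) (lt : G -> G -> Prop) : Prop :=
  (forall x, ~ lt x x) /\
  (forall x y z, lt x y -> lt y z -> lt x z) /\
  (forall x y, lt x y \/ x = y \/ lt y x) /\
  (forall x y z, lt x y -> lt (x + z) (y + z)).

Definition le_of (G : zmodType) (lt : G -> G -> Prop) (x y : G) : Prop :=
  lt x y \/ x = y.

(* (G, psi) is an asymptotic couple; psi : G -> G is total but only its
   values on G \ {0} are constrained / used. *)
Definition asymptotic_couple (G : zmodType) (lt : G -> G -> Prop)
  (psi : G -> G) : Prop :=
  ordered_abelian_group lt /\
  (forall a b : G, a <> 0 -> b <> 0 -> a + b <> 0 ->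
     le_of lt (psi a) (psi (a + b)) \/ le_of lt (psi b) (psi (a + b))) /\
  (forall (a : G) (k : int), a <> 0 -> k <> 0 -> psi (a *~ k) = psi a) /\
  (forall a b : G, lt 0 a -> b <> 0 -> lt (psi b) (a + psi a)).

Definition H_asymptotic (G : zmodType) (lt : G -> G -> Prop) (psi : G -> G)
  : Prop :=
  forall a b : G, lt 0 a -> le_of lt a b -> le_of lt (psi b) (psi a).

Definition asymptotic_integration (G : zmodType) (psi : G -> G) : Prop :=
  forall a : G, exists g : G, g <> 0 /\ a = g + psi g.

Definition PsiSet (G : zmodType) (psi : G -> G) (x : G) : Prop :=
  exists g : G, g <> 0 /\ x = psi g.

Definition downward_closure (G : zmodType) (lt : G -> G -> Prop)
  (S : G -> Prop) (d : G) : Prop :=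
  exists s, S s /\ le_of lt d s.

Definition convex_subgroup (G : zmodType) (lt : G -> G -> Prop)
  (D : G -> Prop) : Prop :=
  D 0 /\ (forall x y, D x -> D y -> D (x - y)) /\
  (forall x y z, D x -> D z -> le_of lt x y -> le_of lt y z -> D y).

Definition jammed (G : zmodType) (lt : G -> G -> Prop) (S : G -> Prop) : Prop :=
  (exists s, S s) /\
  (~ exists m, S m /\ forall s, S s -> le_of lt s m) /\
  (forall D : G -> Prop, convex_subgroup lt D -> (exists x, D x /\ x <> 0) ->
     exists g0, S g0 /\ forall g1, S g1 -> lt g0 g1 -> D (g1 - g0)).

From mathcomp Require Import all_boot all_algebra.
Import GRing.Theory.
Local Open Scope ring_scope.

Set Implicit Arguments. Unset Strict Implicit.

(* If 0 < d and psi d < psi b, then psi b - psi d < d: write psi b = psi c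
   with c > 0; H-asymptoticity forces c < d, hence psi (d - c) <= psi d, and
   the third axiom at d - c gives
   psi c < (d - c) + psi (d - c) <= (d - c) + psi d < d + psi d.
   So, above psi d, both Psi and its downward closure only reach into the
   interval (psi d, psi d + d), which lies in any convex subgroup containing d.
   Asymptotic integration supplies, for each psi b, some g < 0 with
   psi b = g + psi g < psi g, so neither set has a greatest element. *)

Section OrderedGroup.
Variables (G : zmodType) (lt : G -> G -> Prop).
Hypothesis OAG : ordered_abelian_group lt.

Lemma ltxx x : ~ lt x x. Proof. by case: OAG => h _; apply: h. Qed.

Lemma lt_trans x y z : lt x y -> lt y z -> lt x z.
Proof. by case: OAG => _ [h _]; apply: h. Qed.

Lemma lt_total x y : lt x y \/ x = y \/ lt y x.
Proof. by case: OAG => _ [_ [h _]]; apply: h. Qed.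

Lemma ltD2r z x y : lt x y -> lt (x + z) (y + z).
Proof. by case: OAG => _ [_ [_ h]]; apply: h. Qed.

Lemma gt0_neq0 x : lt 0 x -> x <> 0.
Proof. by move=> x_gt0 x0; move: x_gt0; rewrite x0; apply: ltxx. Qed.

Lemma le_lt_trans x y z : le_of lt x y -> lt y z -> lt x z.
Proof. by case=> [|->] //; apply: lt_trans. Qed.

Lemma lt_le_trans x y z : lt x y -> le_of lt y z -> lt x z.
Proof. by move=> xy [|<-] //; apply: lt_trans. Qed.

Lemma leD2r z x y : le_of lt x y -> le_of lt (x + z) (y + z).
Proof. by case=> [xy|->]; [left; apply: ltD2r | right]. Qed.

Lemma subr_gt0 x y : lt x y -> lt 0 (y - x).
Proof. by move=> /(ltD2r (- x)); rewrite subrr. Qed.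

Lemma oppr_gt0 x : lt x 0 -> lt 0 (- x).
Proof. by move=> /subr_gt0; rewrite sub0r. Qed.

Lemma gtrBl x y : lt 0 y -> lt (x - y) x.
Proof. by move=> /(ltD2r (x - y)); rewrite add0r [y + _]addrC subrK. Qed.

Lemma gtrDr x y : lt y 0 -> lt (y + x) x.
Proof. by move=> /(ltD2r x); rewrite add0r. Qed.

Lemma convex_subgroup_gt0 (D : G -> Prop) :
  convex_subgroup lt D -> (exists x, D x /\ x <> 0) -> exists d, D d /\ lt 0 d.
Proof.
move=> [D0 [DB _]] [x [Dx x_neq0]].
case: (lt_total 0 x) => [x_gt0|[x0|x_lt0]]; first by exists x.
  by case: x_neq0.
by exists (- x); split; [rewrite -sub0r; apply: DB | apply: oppr_gt0].
Qed.

Lemma convex_subgroup_between (D : G -> Prop) d y :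
  convex_subgroup lt D -> D d -> lt 0 y -> lt y d -> D y.
Proof. by move=> [D0 [_ Dconvex]] Dd y_gt0 yd; apply: (Dconvex 0 y d) => //; left. Qed.

Lemma downward_closure_sub (S : G -> Prop) x : S x -> downward_closure lt S x.
Proof. by move=> Sx; exists x; split; [|right]. Qed.

Definition unbounded_above (S : G -> Prop) :=
  forall m, S m -> exists s, S s /\ lt m s.

Lemma downward_closure_unbounded_above (S : G -> Prop) :
  unbounded_above S -> unbounded_above (downward_closure lt S).
Proof.
move=> S_unbounded m [s [Ss ms]].
have [s' [Ss' ss']] := S_unbounded s Ss.
by exists s'; split; [apply: downward_closure_sub | apply: le_lt_trans ms ss'].
Qed.

Lemma jammed_of_small_gaps (S : G -> Prop) :
  (exists s, S s) -> unbounded_above S ->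
  (forall d, lt 0 d ->
     exists g0, S g0 /\ forall g1, S g1 -> lt g0 g1 -> lt (g1 - g0) d) ->
  jammed lt S.
Proof.
move=> S_nonempty S_unbounded small_gaps; split=> //; split.
  move=> [m [Sm m_max]]; have [s [Ss ms]] := S_unbounded m Sm.
  exact: ltxx (lt_le_trans ms (m_max s Ss)).
move=> D D_convex D_nontrivial.
have [d [Dd d_gt0]] := convex_subgroup_gt0 D_convex D_nontrivial.
have [g0 [Sg0 g0_gaps]] := small_gaps d d_gt0.
exists g0; split=> // g1 Sg1 g01.
apply: (convex_subgroup_between D_convex Dd); first exact: subr_gt0.
exact: g0_gaps.
Qed.

Lemma jammed_with_downward_closure (S : G -> Prop) :
  (exists s, S s) -> unbounded_above S ->
  (forall d, lt 0 d -> exists g0, S g0 /\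
     forall g1, downward_closure lt S g1 -> lt g0 g1 -> lt (g1 - g0) d) ->
  jammed lt S /\ jammed lt (downward_closure lt S).
Proof.
move=> [s Ss] S_unbounded small_gaps; split; apply: jammed_of_small_gaps.
- by exists s.
- exact: S_unbounded.
- move=> d /small_gaps [g0 [Sg0 g0_gaps]]; exists g0; split=> // g1 Sg1.
  exact/g0_gaps/downward_closure_sub.
- by exists s; apply: downward_closure_sub.
- exact: downward_closure_unbounded_above.
- move=> d /small_gaps [g0 [Sg0 g0_gaps]]; exists g0; split=> //.
  exact: downward_closure_sub.
Qed.

End OrderedGroup.

Section AsymptoticCouple.
Variables (G : zmodType) (lt : G -> G -> Prop) (psi : G -> G).
Hypothesis couple : asymptotic_couple lt psi.
Hypothesis H_asym : H_asymptotic lt psi.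

Let OAG : ordered_abelian_group lt := proj1 couple.

Lemma psi_gt0_repr g : g <> 0 -> exists c, lt 0 c /\ psi c = psi g.
Proof.
case: couple => _ [_ [psiZ _]] g_neq0.
case: (lt_total OAG 0 g) => [g_gt0|[g0|g_lt0]]; first by exists g.
  by case: g_neq0.
by exists (- g); split; [apply: oppr_gt0 | rewrite -mulrN1z psiZ].
Qed.

Lemma psiB_lt d b : lt 0 d -> b <> 0 -> lt (psi d) (psi b) ->
  lt (psi b - psi d) d.
Proof.
case: couple => _ [psiD [_ psi_lt]] d_gt0 b_neq0.
have [c [c_gt0 <-]] := psi_gt0_repr b_neq0; move=> psi_dc.
have cd : lt c d.
  case: (lt_total OAG c d) => [//|dc].
  have psi_cd : le_of lt (psi c) (psi d).
    by apply: H_asym => //; case: dc => [->|]; [right | left].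
  by case: (ltxx OAG (le_lt_trans OAG psi_cd psi_dc)).
have dc_gt0 := subr_gt0 OAG cd.
have psi_dc_le : le_of lt (psi (d - c)) (psi d).
  have := psiD c (d - c) (gt0_neq0 OAG c_gt0) (gt0_neq0 OAG dc_gt0).
  rewrite addrC subrK => /(_ (gt0_neq0 OAG d_gt0)) [psi_cd|//].
  by case: (ltxx OAG (le_lt_trans OAG psi_cd psi_dc)).
have psi_c_lt : lt (psi c) (d - c + psi d).
  apply: (lt_le_trans OAG (psi_lt _ _ dc_gt0 (gt0_neq0 OAG c_gt0))).
  by rewrite ![d - c + _]addrC; apply: leD2r.
have := ltD2r OAG (- psi d) psi_c_lt; rewrite addrK => psi_cd_lt.
exact: (lt_trans OAG psi_cd_lt (gtrBl OAG d c_gt0)).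
Qed.

Lemma downward_closure_PsiSet_small_gaps d : lt 0 d ->
  exists g0, PsiSet psi g0 /\ forall g1,
    downward_closure lt (PsiSet psi) g1 -> lt g0 g1 -> lt (g1 - g0) d.
Proof.
move=> d_gt0; exists (psi d); split.
  by exists d; split; [exact: (gt0_neq0 OAG d_gt0)|].
move=> g1 [_ [[b [b_neq0 ->]] g1_le]] psi_d_g1.
apply: (le_lt_trans OAG (leD2r OAG _ g1_le)).
exact: psiB_lt d_gt0 b_neq0 (lt_le_trans OAG psi_d_g1 g1_le).
Qed.

Hypothesis asym_int : asymptotic_integration psi.

Lemma PsiSet_nonempty : exists s, PsiSet psi s.
Proof. by case: (asym_int 0) => g [g_neq0 _]; exists (psi g), g. Qed.

Lemma PsiSet_unbounded_above : unbounded_above lt (PsiSet psi).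
Proof.
case: couple => _ [_ [_ psi_lt]] _ [b [b_neq0 ->]].
have [g [g_neq0 psi_b]] := asym_int (psi b).
case: (lt_total OAG 0 g) => [g_gt0|[g0|g_lt0]].
- by have := psi_lt _ _ g_gt0 b_neq0; rewrite -psi_b => /(ltxx OAG).
- by case: g_neq0.
- by exists (psi g); split; [exists g | rewrite psi_b; apply: gtrDr].
Qed.

End AsymptoticCouple.

Theorem lemma3p11 (G : zmodType) (lt : G -> G -> Prop) (psi : G -> G) :
  asymptotic_couple lt psi -> H_asymptotic lt psi ->
  asymptotic_integration psi ->
  jammed lt (PsiSet psi) /\ jammed lt (downward_closure lt (PsiSet psi)).
Proof.
move=> couple H_asym asym_int; have [OAG _] := couple.
apply: (jammed_with_downward_closure OAG).
- exact: PsiSet_nonempty.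
- exact: PsiSet_unbounded_above.
- exact: downward_closure_PsiSet_small_gaps.
Qed.
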